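(* Let $L$ be an infinite set and let $Q$ be either the edgeless cube $Q_L$ or the edged cube $\bar Q_L$. The universally convergent basic sequences on $Q$ form a submonoid $\mathrm{uc}_L$ of the monoid $\mathrm{m}_L$ of all basic sequences under concatenation.
   Context: Let $L$ be an infinite set, $-L=\{-r:r\in L\}$ a disjoint copy of $L$, and $0$ a new element; $L^\dagger=-L\cup\{0\}\cup L$ with $-(-r)=r$, $-0=0$. Adjoin $\pm\infty$ with $-(+\infty)=-\infty$ and set $\bar L^\dagger=L^\dagger\cup\{\pm\infty\}$. Points of $U=(\bar L^\dagger)^3$ have coordinates $x,y,z$. The edgeless cube $Q_L$ is the set of points of $U$ with exactly one coordinate in $\{\pm\infty\}$ (cells). The edged cube $\bar Q_L$ is the set of cells $(p,i)$ with $p\in U$, $i\in\{x,y,z\}$, $p_i\in\{\pm\infty\}$ ($i$ marks the face). For $i\in\{x,y,z\}$, $\alpha\in\bar L^\dagger$, the quarter-turn twist $T_{i,\alpha}$ is the permutation of cells fixing every cell whose point $p$ has $p_i\ne\alpha$ and acting on the others by $T_{x,\alpha}(\alpha,y,z)=(\alpha,-z,y)$, $T_{y,\alpha}(x,\alpha,z)=(z,\alpha,-x)$, $T_{z,\alpha}(x,y,\alpha)=(-y,x,\alpha)$ (in $\bar Q_L$ the marked coordinate is carried along by the rotation). Basic twists are $T,T^2,T^3$ for quarter-turn twists $T$. A basic sequence is a sequence $\langle\sigma_\eta:\eta<\theta\rangle$ of basic twists of ordinal length $\theta$; $\mathrm{m}_L$ is the monoid of all basic sequences under concatenation, with identity the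 empty sequence. A labelling is a map $f$ from cells to $X\cup\{\mathrm{NaC}\}$ for a set $X\not\ni\mathrm{NaC}$; it is legal if it never takes value NaC. A twist $\sigma$ acts by $(\sigma f)(c)=f(\sigma^{-1}c)$. Applying $\langle\sigma_\eta:\eta<\theta\rangle$ to $f_0$ produces $f_{\eta+1}=\sigma_\eta f_\eta$, and for limit $\lambda\le\theta$, $f_\lambda(c)$ is the eventually constant value of $f_\eta(c)$ ($\eta<\lambda$) if it exists and NaC otherwise; $f_\theta$ is the terminal labelling. The sequence is universally convergent if, applied to the identity labelling (each cell labelled by itself), its terminal labelling is legal. *)

From Stdlib Require Import List ClassicalEpsilon.
Set Implicit Arguments.

Definition infinite_type (L : Type) : Prop :=
  forall l : list L, exists x : L, ~ In x l.

Inductive Ldag (L : Type) : Type := LNeg (r : L) | LZero | LPos (r : L).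
Arguments LNeg {L} r. Arguments LZero {L}. Arguments LPos {L} r.

Definition ldneg {L} (a : Ldag L) : Ldag L :=
  match a with LNeg r => LPos r | LZero => LZero | LPos r => LNeg r end.

Inductive Lbar (L : Type) : Type := LFin (a : Ldag L) | LPInf | LMInf.
Arguments LFin {L} a. Arguments LPInf {L}. Arguments LMInf {L}.

Definition lbneg {L} (v : Lbar L) : Lbar L :=
  match v with LFin a => LFin (ldneg a) | LPInf => LMInf | LMInf => LPInf end.

Definition is_inf {L} (v : Lbar L) : bool :=
  match v with LFin _ => false | _ => true end.

Lemma is_inf_neg {L} (v : Lbar L) : is_inf (lbneg v) = is_inf v.
Proof. destruct v; reflexivity. Qed.

Inductive axis : Type := AX | AY | AZ.

Definition point (L : Type) : Type := (Lbar L * Lbar L * Lbar L)%type.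

Definition coord {L} (p : point L) (i : axis) : Lbar L :=
  match p with (x, y, z) => match i with AX => x | AY => y | AZ => z end end.

Definition rot_pt {L} (i : axis) (p : point L) : point L :=
  match p with (x, y, z) =>
    match i with
    | AX => (x, lbneg z, y)
    | AY => (z, y, lbneg x)
    | AZ => (lbneg y, x, z)
    end end.

(* where the coordinate j is carried by the rotation about axis i *)
Definition rot_axis (i j : axis) : axis :=
  match i, j with
  | AX, AY => AZ | AX, AZ => AY
  | AY, AX => AZ | AY, AZ => AX
  | AZ, AX => AY | AZ, AY => AX
  | _, _ => j
  end.

Definition at_layer {L} (i : axis) (alpha : Lbar L) (p : point L) : bool :=
  if excluded_middle_informative (coord p i = alpha) then true else false.

Definition qturn_pt {L} (i : axis) (alpha : Lbar L) (p : point L) : point L :=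
  if at_layer i alpha p then rot_pt i p else p.

(** * Edgeless cube Q_L: points with exactly one infinite coordinate *)
Definition b2n (b : bool) : nat := if b then 1 else 0.

Definition edgeless_cellb {L} (p : point L) : bool :=
  match p with (x, y, z) =>
    Nat.eqb (b2n (is_inf x) + b2n (is_inf y) + b2n (is_inf z)) 1
  end.

Lemma rot_pt_edgeless {L} (i : axis) (p : point L) :
  edgeless_cellb (rot_pt i p) = edgeless_cellb p.
Proof.
  destruct p as [[x y] z]; destruct i; simpl; rewrite ?is_inf_neg;
  destruct (is_inf x), (is_inf y), (is_inf z); reflexivity.
Qed.

Lemma qturn_pt_edgeless {L} (i : axis) (alpha : Lbar L) (p : point L) :
  edgeless_cellb p = true -> edgeless_cellb (qturn_pt i alpha p) = true.
Proof.
  intro H; unfold qturn_pt; destruct (at_layer i alpha p);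
  [rewrite rot_pt_edgeless|]; exact H.
Qed.

Definition ecell (L : Type) : Type := { p : point L | edgeless_cellb p = true }.

Definition qturn_ecell {L} (i : axis) (alpha : Lbar L) (c : ecell L) : ecell L :=
  exist _ (qturn_pt i alpha (proj1_sig c))
          (@qturn_pt_edgeless L i alpha (proj1_sig c) (proj2_sig c)).

(** * Edged cube bar Q_L: pairs (p, i) with p_i infinite *)

Lemma rot_coord_inf {L} (i j : axis) (p : point L) :
  is_inf (coord (rot_pt i p) (rot_axis i j)) = is_inf (coord p j).
Proof.
  destruct p as [[x y] z]; destruct i, j; simpl; rewrite ?is_inf_neg; reflexivity.
Qed.

Definition qturn_dpt {L} (i : axis) (alpha : Lbar L) (c : point L * axis)
  : point L * axis :=
  if at_layer i alpha (fst c) then (rot_pt i (fst c), rot_axis i (snd c)) else c.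

Lemma qturn_dpt_cell {L} (i : axis) (alpha : Lbar L) (c : point L * axis) :
  is_inf (coord (fst c) (snd c)) = true ->
  is_inf (coord (fst (qturn_dpt i alpha c)) (snd (qturn_dpt i alpha c))) = true.
Proof.
  intro H; unfold qturn_dpt; destruct (at_layer i alpha (fst c)); simpl;
  [rewrite rot_coord_inf|]; exact H.
Qed.

Definition dcell (L : Type) : Type :=
  { c : point L * axis | is_inf (coord (fst c) (snd c)) = true }.

Definition qturn_dcell {L} (i : axis) (alpha : Lbar L) (c : dcell L) : dcell L :=
  exist _ (qturn_dpt i alpha (proj1_sig c)) (@qturn_dpt_cell L i alpha (proj1_sig c) (proj2_sig c)).

Inductive pow3 : Type := Pow1 | Pow2 | Pow3.
Definition pow3_nat (k : pow3) : nat := match k with Pow1 => 1 | Pow2 => 2 | Pow3 => 3 end.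

Record basic_twist (L : Type) : Type :=
  BasicTwist { bt_axis : axis; bt_pos : Lbar L; bt_pow : pow3 }.

Definition act_twist {L C : Type} (qt : axis -> Lbar L -> C -> C)
  (s : basic_twist L) (c : C) : C :=
  Nat.iter (pow3_nat (bt_pow s)) (qt (bt_axis s) (bt_pos s)) c.

Record wellorder : Type := WellOrder {
  wo_car :> Type;
  wo_lt : wo_car -> wo_car -> Prop;
  wo_trans : forall a b c, wo_lt a b -> wo_lt b c -> wo_lt a c;
  wo_total : forall a b, wo_lt a b \/ a = b \/ wo_lt b a;
  wo_wf : well_founded wo_lt }.

(* a basic sequence <sigma_eta : eta < theta>, theta = order type of the index *)
Record basic_seq (L : Type) : Type :=
  BasicSeq { bs_idx : wellorder; bs_tw : bs_idx -> basic_twist L }.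

Definition empty_wo : wellorder.
Proof.
  refine (@WellOrder Empty_set (fun _ _ => False) _ _ _).
  - intros a; destruct a.
  - intros a; destruct a.
  - intros a; destruct a.
Defined.

Definition empty_seq (L : Type) : basic_seq L :=
  @BasicSeq L empty_wo (fun e => match e with end).

Definition sum_lt (I J : wellorder) (a b : I + J) : Prop :=
  match a, b with
  | inl x, inl y => wo_lt I x y
  | inl _, inr _ => True
  | inr _, inl _ => False
  | inr x, inr y => wo_lt J x y
  end.

Lemma sum_lt_wf (I J : wellorder) : well_founded (sum_lt I J).
Proof.
  assert (HI : forall x : I, Acc (sum_lt I J) (inl x)).
  { intro x; induction (wo_wf I x) as [x _ IH].
    constructor; intros [y|y] Hy; simpl in Hy; [apply IH; exact Hy|destruct Hy]. }
  intros [x|y]; [apply HI|].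
  induction (wo_wf J y) as [y _ IH].
  constructor; intros [x|x] Hx; simpl in Hx; [apply HI|apply IH; exact Hx].
Qed.

Definition sum_wo (I J : wellorder) : wellorder.
Proof.
  refine (@WellOrder (I + J)%type (sum_lt I J) _ _ (sum_lt_wf I J)).
  - intros [a|a] [b|b] [c|c]; simpl; try tauto; apply wo_trans.
  - intros [a|a] [b|b]; simpl; auto.
    + destruct (wo_total I a b) as [H|[H|H]]; subst; auto.
    + destruct (wo_total J a b) as [H|[H|H]]; subst; auto.
Defined.

Definition concat_seq {L} (s t : basic_seq L) : basic_seq L :=
  @BasicSeq L (sum_wo (bs_idx s) (bs_idx t))
    (fun e => match e with inl x => bs_tw s x | inr y => bs_tw t y end).

(* stages eta <= theta: Some i = stage i < theta, None = stage theta *)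
Definition stage (I : wellorder) : Type := option I.

Definition stage_lt {I : wellorder} (s t : stage I) : Prop :=
  match s, t with
  | Some a, Some b => wo_lt I a b
  | Some _, None => True
  | None, _ => False
  end.

Definition stage_le {I : wellorder} (s t : stage I) : Prop := s = t \/ stage_lt s t.

Definition is_succ {I : wellorder} (s t : stage I) : Prop :=
  stage_lt s t /\ forall u, stage_lt s u -> stage_le t u.

Definition is_limit {I : wellorder} (t : stage I) : Prop :=
  (exists s, stage_lt s t) /\ forall i : I, ~ is_succ (Some i) t.

(* labellings with values in X u {NaC}; None plays the role of NaC *)
Definition labelling (C X : Type) : Type := C -> option X.

Definition eventually_const {I : wellorder} {C X : Type}
  (F : stage I -> labelling C X) (t : stage I) (c : C) (v : option X) : Prop :=
  exists s, stage_lt s t /\ forall u, stage_le s u -> stage_lt u t -> F u c = v.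

(* The successor clause f_{eta+1} = sigma_eta f_eta, i.e.
   f_{eta+1}(c) = f_eta(sigma_eta^{-1} c), is written as
   f_{eta+1}(sigma_eta d) = f_eta(d) for all cells d. *)
Definition is_run {L C X : Type} (qt : axis -> Lbar L -> C -> C)
  (s : basic_seq L) (f0 : labelling C X)
  (F : stage (bs_idx s) -> labelling C X) : Prop :=
  (forall t, (forall u, ~ stage_lt u t) -> F t = f0) /\
  (forall (i : bs_idx s) (t : stage (bs_idx s)), is_succ (Some i) t ->
     forall d : C, F t (act_twist qt (bs_tw s i) d) = F (Some i) d) /\
  (forall t, is_limit t -> forall c : C,
     (forall v, eventually_const F t c v -> F t c = v) /\
     ((~ exists v, eventually_const F t c v) -> F t c = None)).

Definition legal {C X : Type} (f : labelling C X) : Prop := forall c, f c <> None.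

Definition univ_convergent {L C : Type} (qt : axis -> Lbar L -> C -> C)
  (s : basic_seq L) : Prop :=
  exists F : stage (bs_idx s) -> labelling C C,
    is_run qt s (fun c => Some c) F /\ legal (F None).

Definition uc_submonoid {L C : Type} (qt : axis -> Lbar L -> C -> C) : Prop :=
  univ_convergent qt (empty_seq L) /\
  forall s t : basic_seq L,
    univ_convergent qt s -> univ_convergent qt t ->
    univ_convergent qt (concat_seq s t).

From Stdlib Require Import Classical Eqdep_dec Bool FinFun.

(* Quarter turns are bijections of the cells, so along a run started from the
   identity labelling no two cells ever carry the same label.  If [s] is
   universally convergent, its terminal labelling g is thus legal and injective,
   and the second half of the run of [s ++ t] is the run of [t] from the
   identity with every label a replaced by g a.  Since g is injective, this
   relabelling preserves eventual constancy, hence the limit stages, and it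
   keeps the terminal labelling legal. *)

Section StageOrder.
Context {I : wellorder}.
Implicit Types u v w t : stage I.

Lemma wo_lt_irrefl (x : I) : ~ wo_lt I x x.
Proof. induction (wo_wf I x) as [x _ IH]. intro Hx. exact (IH x Hx Hx). Qed.

Lemma stage_lt_irrefl u : ~ stage_lt u u.
Proof. destruct u; simpl; [apply wo_lt_irrefl | tauto]. Qed.

Lemma stage_lt_trans u v w : stage_lt u v -> stage_lt v w -> stage_lt u w.
Proof. destruct u, v, w; simpl; try tauto; apply wo_trans. Qed.

Lemma stage_lt_total u v : stage_lt u v \/ u = v \/ stage_lt v u.
Proof.
  destruct u as [a|], v as [b|]; simpl; auto.
  destruct (wo_total I a b) as [H|[H|H]]; subst; auto.
Qed.

Lemma stage_lt_wf : well_founded (@stage_lt I).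
Proof.
  assert (HS : forall x : I, Acc stage_lt (Some x)).
  { intro x; induction (wo_wf I x) as [x _ IH].
    constructor; intros [y|] Hy; [apply IH; exact Hy | destruct Hy]. }
  intros [x|]; [apply HS|].
  constructor; intros [y|] Hy; [apply HS | destruct Hy].
Qed.

Lemma stage_le_lt_trans u v w : stage_le u v -> stage_lt v w -> stage_lt u w.
Proof. intros [E|E] H; [subst; exact H | exact (stage_lt_trans _ _ _ E H)]. Qed.

Lemma stage_le_not_lt u v : stage_le u v -> ~ stage_lt v u.
Proof. intros Huv Hvu. exact (stage_lt_irrefl u (stage_le_lt_trans _ _ _ Huv Hvu)). Qed.

Lemma stage_le_of_not_lt u v : ~ stage_lt v u -> stage_le u v.
Proof.
  intro H. destruct (stage_lt_total u v) as [E|[E|E]]; [right | left | contradiction];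
  assumption.
Qed.

Lemma stage_cases t :
  (forall u, ~ stage_lt u t) \/ (exists i, is_succ (Some i) t) \/ is_limit t.
Proof.
  destruct (classic (exists u, stage_lt u t)) as [Hne|Hempty].
  - destruct (classic (exists i, is_succ (Some i) t)) as [Hsucc|Hnsucc]; [tauto|].
    right; right; split; [exact Hne|]. intros i Hi; apply Hnsucc; exists i; exact Hi.
  - left; intros u Hu; apply Hempty; exists u; exact Hu.
Qed.

Lemma eventually_const_common {C X : Type} (F : stage I -> labelling C X) t
  (c1 c2 : C) (v : option X) :
  eventually_const F t c1 v -> eventually_const F t c2 v ->
  exists u, stage_lt u t /\ F u c1 = v /\ F u c2 = v.
Proof.
  intros [u1 [Hu1 E1]] [u2 [Hu2 E2]].
  destruct (stage_lt_total u1 u2) as [H|[<-|H]]; [exists u2 | exists u1 | exists u1];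
    repeat split; try apply E1; try apply E2; first [assumption | now left | now right].
Qed.
End StageOrder.

Section Runs.
Context {L C X : Type} (qt : axis -> Lbar L -> C -> C) (s : basic_seq L).
Implicit Types (F : stage (bs_idx s) -> labelling C X).

Definition run_at (f0 : labelling C X) F (t : stage (bs_idx s)) : Prop :=
  ((forall u, ~ stage_lt u t) -> F t = f0) /\
  (forall i, is_succ (Some i) t -> forall d, F t (act_twist qt (bs_tw s i) d) = F (Some i) d) /\
  (is_limit t -> forall c, (forall v, eventually_const F t c v -> F t c = v) /\
     ((~ exists v, eventually_const F t c v) -> F t c = None)).

Lemma is_run_iff (f0 : labelling C X) F : is_run qt s f0 F <-> forall t, run_at f0 F t.
Proof.
  split.
  - intros [H0 [HS HL]] t. exact (conj (H0 t) (conj (fun i => HS i t) (HL t))).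
  - intro H. split; [|split].
    + intro t. exact (proj1 (H t)).
    + intros i t. exact (proj1 (proj2 (H t)) i).
    + intro t. exact (proj2 (proj2 (H t))).
Qed.

Lemma run_at_change_init (f0 f1 : labelling C X) F t :
  (exists u, stage_lt u t) -> run_at f0 F t -> run_at f1 F t.
Proof.
  intros [u Hu] [_ HSL]. split; [|exact HSL].
  intro Hmin. contradiction (Hmin u Hu).
Qed.

Lemma run_limit_eventually (f0 : labelling C X) F t c v :
  is_run qt s f0 F -> is_limit t -> F t c = Some v -> eventually_const F t c (Some v).
Proof.
  intros [_ [_ HL]] Ht E. destruct (HL t Ht c) as [Hconst Hnone].
  destruct (classic (exists w, eventually_const F t c w)) as [[w Hw]|N].
  - now rewrite (Hconst w Hw) in E; subst w.
  - now rewrite (Hnone N) in E.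
Qed.

End Runs.

Section Transport.
Context {L C X : Type} (qt : axis -> Lbar L -> C -> C) (f0 : labelling C X).
Variables (s r : basic_seq L) (phi : stage (bs_idx s) -> stage (bs_idx r)).
Variables (H : stage (bs_idx s) -> labelling C X) (G : stage (bs_idx r) -> labelling C X).
Variable t : stage (bs_idx s).

Hypothesis phi_mono :
  forall u v, stage_le v t -> stage_lt u v -> stage_lt (phi u) (phi v).
(* The run clauses at a stage only see a final segment of the stages below it,
   so they transfer from [t] to [phi t] when the image of the stages below [t]
   is such a final segment (nonempty unless nothing lies below [phi t]). *)
Hypothesis phi_final : forall w, stage_lt w (phi t) ->
  (exists u, stage_lt u t /\ phi u = w) \/
  ((exists u, stage_lt u t) /\ forall u, stage_lt u t -> stage_lt w (phi u)).
Hypothesis phi_twist : forall i k, phi (Some i) = Some k -> bs_tw r k = bs_tw s i.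
Hypothesis G_phi : forall u, stage_le u t -> G (phi u) = H u.

Lemma phi_lt u : stage_lt u t -> stage_lt (phi u) (phi t).
Proof. apply phi_mono. now left. Qed.

Lemma phi_lt_reflect u v : stage_le u t -> stage_lt (phi u) (phi v) -> stage_lt u v.
Proof.
  intros Hu Hphi. apply NNPP; intro Hnot.
  destruct (stage_le_of_not_lt v u Hnot) as [E|E].
  - subst. exact (stage_lt_irrefl _ Hphi).
  - exact (stage_lt_irrefl _ (stage_lt_trans _ _ _ Hphi (phi_mono v u Hu E))).
Qed.

Lemma is_succ_phi u : is_succ u t -> is_succ (phi u) (phi t).
Proof.
  intros [Hut Hmin]. split; [exact (phi_lt u Hut)|].
  intros w Hw. apply stage_le_of_not_lt. intro Hwt.
  destruct (phi_final w Hwt) as [[v [Hvt <-]] | [_ Hbelow]].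
  - apply phi_lt_reflect in Hw; [| now right].
    exact (stage_le_not_lt _ _ (Hmin v Hw) Hvt).
  - exact (stage_lt_irrefl _ (stage_lt_trans _ _ _ Hw (Hbelow u Hut))).
Qed.

Lemma is_succ_phi_inv w : is_succ w (phi t) -> exists u, phi u = w /\ is_succ u t.
Proof.
  intros [Hwt Hmin].
  destruct (phi_final w Hwt) as [[u [Hut <-]] | [[v Hvt] Hbelow]].
  - exists u. split; [reflexivity|]. split; [exact Hut|].
    intros v Huv. apply stage_le_of_not_lt. intro Hvt.
    apply (stage_le_not_lt _ _ (Hmin (phi v) (phi_mono u v (or_intror Hvt) Huv))).
    exact (phi_lt v Hvt).
  - exfalso. exact (stage_le_not_lt _ _ (Hmin _ (Hbelow v Hvt)) (phi_lt v Hvt)).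
Qed.

Lemma is_limit_phi_inv : is_limit (phi t) -> is_limit t.
Proof.
  intros [[w Hw] Hnsucc]. split.
  - destruct (phi_final w Hw) as [[u [Hu _]] | [Hne _]]; [exists u; exact Hu | exact Hne].
  - intros i Hi. pose proof (is_succ_phi _ Hi) as Hsucc.
    destruct (phi (Some i)) as [k|] eqn:E; [exact (Hnsucc k Hsucc) | exact (proj1 Hsucc)].
Qed.

Lemma eventually_const_phi c v :
  eventually_const G (phi t) c v <-> eventually_const H t c v.
Proof.
  split.
  - intros [w0 [Hw0 Hconst]].
    assert (Hu0 : exists u0, stage_lt u0 t /\ stage_le w0 (phi u0)).
    { destruct (phi_final w0 Hw0) as [[u [Hu <-]] | [[u Hu] Hbelow]];
        exists u; split; auto; [now left | right; exact (Hbelow u Hu)]. }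
    destruct Hu0 as [u0 [Hu0 Hle0]]. exists u0. split; [exact Hu0|].
    intros u Hu0u Hut. rewrite <- (G_phi u (or_intror Hut)).
    apply Hconst; [| exact (phi_lt u Hut)].
    destruct Hu0u as [<- | Hlt]; [exact Hle0 | right].
    exact (stage_le_lt_trans _ _ _ Hle0 (phi_mono u0 u (or_intror Hut) Hlt)).
  - intros [u0 [Hu0 Hconst]]. exists (phi u0). split; [exact (phi_lt u0 Hu0)|].
    intros w Hle Hwt.
    destruct (phi_final w Hwt) as [[u [Hut <-]] | [_ Hbelow]].
    + rewrite (G_phi u (or_intror Hut)). apply Hconst; [|exact Hut].
      apply stage_le_of_not_lt. intro Huu0.
      exact (stage_le_not_lt _ _ Hle (phi_mono u u0 (or_intror Hu0) Huu0)).
    + exfalso. exact (stage_le_not_lt _ _ Hle (Hbelow u0 Hu0)).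
Qed.

Lemma run_at_phi : run_at qt s f0 H t -> run_at qt r f0 G (phi t).
Proof.
  intros [H0 [HS HL]]. pose proof (G_phi t (or_introl eq_refl)) as Et.
  split; [|split].
  - intro Hmin. rewrite Et. apply H0. intros u Hu. exact (Hmin _ (phi_lt u Hu)).
  - intros k Hk d. destruct (is_succ_phi_inv _ Hk) as [[i|] [Ei Hi]]; [|destruct (proj1 Hi)].
    rewrite (phi_twist i k Ei), Et, (HS i Hi d), <- Ei, G_phi; [reflexivity|].
    right; exact (proj1 Hi).
  - intros Hl c. destruct (HL (is_limit_phi_inv Hl) c) as [Hconst Hnone]. rewrite Et. split.
    + intros v Hv. apply Hconst, eventually_const_phi, Hv.
    + intros Hnc. apply Hnone. intros [v Hv]. apply Hnc. exists v. apply eventually_const_phi, Hv.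
Qed.
End Transport.

Section Concatenation.
Context {L C X : Type} (qt : axis -> Lbar L -> C -> C) {s t : basic_seq L}.
Notation K := (bs_idx (concat_seq s t)).

Definition concat_run (Fs : stage (bs_idx s) -> labelling C X)
  (Ft : stage (bs_idx t) -> labelling C X) (u : stage K) : labelling C X :=
  match u with
  | Some (inl x) => Fs (Some x)
  | Some (inr y) => Ft (Some y)
  | None => Ft None
  end.

Definition left_stage (b : stage K) (u : stage (bs_idx s)) : stage K :=
  match u with Some x => Some (inl x) | None => b end.

Definition right_stage (u : stage (bs_idx t)) : stage K :=
  match u with Some y => Some (inr y) | None => None end.

Variables (f0 : labelling C X) (Fs : stage (bs_idx s) -> labelling C X)
  (Ft : stage (bs_idx t) -> labelling C X).
Hypothesis Rs : is_run qt s f0 Fs.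
Hypothesis Rt : is_run qt t (Fs None) Ft.

Lemma run_at_concat_left x : run_at qt (concat_seq s t) f0 (concat_run Fs Ft) (Some (inl x)).
Proof.
  apply (run_at_phi qt f0 s (concat_seq s t) (left_stage None) Fs (concat_run Fs Ft) (Some x)).
  - intros [a|] [b|] Hv Huv; try contradiction; [exact Huv|].
    destruct Hv as [E|[]]; discriminate.
  - intros [[z|z]|] Hw; try contradiction.
    left. exists (Some z). split; [exact Hw | reflexivity].
  - intros i k E. injection E as <-. reflexivity.
  - intros [a|] Hu; [reflexivity|]. destruct Hu as [E|[]]; discriminate.
  - apply is_run_iff, Rs.
Qed.

Lemma run_at_concat_junction (u0 : stage (bs_idx t)) :
  (forall u, ~ stage_lt u u0) ->
  run_at qt (concat_seq s t) f0 (concat_run Fs Ft) (right_stage u0).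
Proof.
  intro Hmin.
  apply (run_at_phi qt f0 s (concat_seq s t) (left_stage (right_stage u0)) Fs
           (concat_run Fs Ft) None).
  - intros [a|] [b|] _ Huv; try contradiction; [exact Huv|]. now destruct u0.
  - intros [[z|z]|] Hw.
    + left. exists (Some z). split; [exact I | reflexivity].
    + exfalso. apply (Hmin (Some z)). now destruct u0.
    + now destruct u0.
  - intros i k E. injection E as <-. reflexivity.
  - intros [a|] _; [reflexivity|]. destruct u0; exact (proj1 Rt _ Hmin).
  - apply is_run_iff, Rs.
Qed.

Lemma run_at_concat_right (u0 : stage (bs_idx t)) :
  (exists u, stage_lt u u0) ->
  run_at qt (concat_seq s t) f0 (concat_run Fs Ft) (right_stage u0).
Proof.
  intro Hne. apply (run_at_change_init qt _ (Fs None)).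
  { destruct Hne as [[y|] Hy]; [|destruct Hy].
    exists (Some (inr y)). now destruct u0. }
  apply (run_at_phi qt (Fs None) t (concat_seq s t) right_stage Ft (concat_run Fs Ft) u0).
  - intros [a|] [b|] _ Huv; try contradiction; exact Huv.
  - intros [[z|z]|] Hw.
    + right. split; [exact Hne|]. intros [b|] _; exact I.
    + left. exists (Some z). split; [now destruct u0 | reflexivity].
    + now destruct u0.
  - intros i k E. injection E as <-. reflexivity.
  - intros [b|] _; reflexivity.
  - apply is_run_iff, Rt.
Qed.

Lemma is_run_concat : is_run qt (concat_seq s t) f0 (concat_run Fs Ft).
Proof.
  apply is_run_iff.
  assert (Hright : forall u0, run_at qt (concat_seq s t) f0 (concat_run Fs Ft) (right_stage u0)).
  { intro u0. destruct (classic (exists u, stage_lt u u0)) as [Hne|Hempty].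
    - exact (run_at_concat_right u0 Hne).
    - apply run_at_concat_junction. intros u Hu. apply Hempty. exists u. exact Hu. }
  intros [[x|y]|]; [apply run_at_concat_left | exact (Hright (Some y)) | exact (Hright None)].
Qed.
End Concatenation.

Lemma eventually_const_relabel {I : wellorder} {C X Y : Type} (F : stage I -> labelling C X)
  (beta : option X -> option Y) t c w :
  Injective beta -> eventually_const (fun u c => beta (F u c)) t c w ->
  exists v, w = beta v /\ eventually_const F t c v.
Proof.
  intros Hinj [u0 [Hu0 Hconst]]. exists (F u0 c). split.
  - symmetry. apply Hconst; [now left | exact Hu0].
  - exists u0. split; [exact Hu0|]. intros u Hle Hu. apply Hinj.
    transitivity w; [apply Hconst | symmetry; apply Hconst]; auto; now left.
Qed.

Lemma is_run_relabel {L C X Y : Type} (qt : axis -> Lbar L -> C -> C) (s : basic_seq L)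
  (f0 : labelling C X) F (beta : option X -> option Y) :
  Injective beta -> beta None = None -> is_run qt s f0 F ->
  is_run qt s (fun c => beta (f0 c)) (fun u c => beta (F u c)).
Proof.
  intros Hinj Hnone [H0 [HS HL]]. split; [|split].
  - intros t Hmin. now rewrite (H0 t Hmin).
  - intros i t Hi d. cbn beta. now rewrite (HS i t Hi d).
  - intros t Hl c. destruct (HL t Hl c) as [Hconst Hnc]. split.
    + intros w Hw. destruct (eventually_const_relabel F beta t c w Hinj Hw) as [v [-> Hv]].
      now rewrite (Hconst v Hv).
    + intros Hn. cbn beta. rewrite Hnc; [exact Hnone|].
      intros [v [u0 [Hu0 Hv]]]. apply Hn. exists (beta v), u0. split; [exact Hu0|].
      intros u Hle Hu. now rewrite (Hv u Hle Hu).
Qed.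

Definition injective_labelling {C X : Type} (f : labelling C X) : Prop :=
  forall c1 c2 v, f c1 = Some v -> f c2 = Some v -> c1 = c2.

Lemma iter_surjective {A : Type} (f : A -> A) n : Surjective f -> Surjective (Nat.iter n f).
Proof.
  intros Hf. induction n as [|n IH]; intro c; simpl.
  - exists c. reflexivity.
  - destruct (Hf c) as [e <-]. destruct (IH e) as [d <-]. exists d. reflexivity.
Qed.

Section InjectiveRuns.
Context {L C X : Type} (qt : axis -> Lbar L -> C -> C).
Hypothesis qt_surjective : forall i a, Surjective (qt i a).

Lemma act_twist_surjective (tw : basic_twist L) : Surjective (act_twist qt tw).
Proof. apply iter_surjective, qt_surjective. Qed.

Lemma run_injective (s : basic_seq L) (f0 : labelling C X) F :
  injective_labelling f0 -> is_run qt s f0 F -> forall t, injective_labelling (F t).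
Proof.
  intros Hf0 HF t. pose proof HF as [H0 [HS _]].
  induction (stage_lt_wf t) as [t _ IH]. intros c1 c2 v E1 E2.
  destruct (stage_cases t) as [Hmin|[[i Hi]|Hl]].
  - rewrite (H0 t Hmin) in E1, E2. exact (Hf0 c1 c2 v E1 E2).
  - destruct (act_twist_surjective (bs_tw s i) c1) as [d1 <-].
    destruct (act_twist_surjective (bs_tw s i) c2) as [d2 <-].
    rewrite (HS i t Hi) in E1, E2. f_equal. exact (IH (Some i) (proj1 Hi) d1 d2 v E1 E2).
  - destruct (eventually_const_common F t c1 c2 (Some v)
                (run_limit_eventually qt s f0 F t c1 v HF Hl E1)
                (run_limit_eventually qt s f0 F t c2 v HF Hl E2)) as [u [Hu [E1' E2']]].
    exact (IH u Hu c1 c2 v E1' E2').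
Qed.
End InjectiveRuns.

Lemma univ_convergent_empty {L C : Type} (qt : axis -> Lbar L -> C -> C) :
  univ_convergent qt (empty_seq L).
Proof.
  exists (fun _ c => Some c). split; [split; [|split]|].
  - reflexivity.
  - intros [].
  - intros t [[[[]|] []] _].
  - intros c. discriminate.
Qed.

Lemma univ_convergent_concat {L C : Type} (qt : axis -> Lbar L -> C -> C) s t :
  (forall i a, Surjective (qt i a)) ->
  univ_convergent qt s -> univ_convergent qt t -> univ_convergent qt (concat_seq s t).
Proof.
  intros Hsurj [Fs [Rs Ls]] [Ft [Rt Lt]].
  set (beta := fun o : option C => match o with Some a => Fs None a | None => None end).
  assert (Hid : injective_labelling (fun c : C => Some c)) by (intros c1 c2 v E1 E2; congruence).
  assert (Hbeta : Injective beta).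
  { intros [a|] [b|] E; simpl in E.
    - destruct (Fs None a) as [v|] eqn:Ea; [|contradiction (Ls a Ea)].
      f_equal. exact (run_injective qt Hsurj s _ Fs Hid Rs None a b v Ea (eq_sym E)).
    - contradiction (Ls a E).
    - contradiction (Ls b (eq_sym E)).
    - reflexivity. }
  exists (concat_run Fs (fun u c => beta (Ft u c))). split.
  - apply is_run_concat; [exact Rs|]. exact (is_run_relabel qt t _ Ft beta Hbeta eq_refl Rt).
  - intros c. simpl. destruct (Ft None c) as [a|] eqn:E; [exact (Ls a) | contradiction (Lt c E)].
Qed.

Lemma uc_submonoid_of_surjective {L C : Type} (qt : axis -> Lbar L -> C -> C) :
  (forall i a, Surjective (qt i a)) -> uc_submonoid qt.
Proof.
  intro Hsurj. split; [apply univ_convergent_empty|].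
  intros s t Hs Ht. exact (univ_convergent_concat qt s t Hsurj Hs Ht).
Qed.

Lemma lbneg_involutive {L : Type} (v : Lbar L) : lbneg (lbneg v) = v.
Proof. destruct v as [[r| |r]| |]; reflexivity. Qed.

Lemma coord_rot_pt {L : Type} i (p : point L) : coord (rot_pt i p) i = coord p i.
Proof. destruct p as [[x y] z]; destruct i; reflexivity. Qed.

Lemma at_layer_rot_pt {L : Type} i (a : Lbar L) p : at_layer i a (rot_pt i p) = at_layer i a p.
Proof. unfold at_layer. now rewrite coord_rot_pt. Qed.

Lemma rot_pt4 {L : Type} i (p : point L) : rot_pt i (rot_pt i (rot_pt i (rot_pt i p))) = p.
Proof. destruct p as [[x y] z]; destruct i; simpl; now rewrite ?lbneg_involutive. Qed.

Lemma rot_axis_involutive i j : rot_axis i (rot_axis i j) = j.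
Proof. destruct i, j; reflexivity. Qed.

Lemma qturn_pt4 {L : Type} i (a : Lbar L) p :
  qturn_pt i a (qturn_pt i a (qturn_pt i a (qturn_pt i a p))) = p.
Proof.
  unfold qturn_pt. destruct (at_layer i a p) eqn:E;
    repeat (rewrite ?at_layer_rot_pt, ?E; cbn iota).
  - apply rot_pt4.
  - reflexivity.
Qed.

Lemma qturn_dpt4 {L : Type} i (a : Lbar L) c :
  qturn_dpt i a (qturn_dpt i a (qturn_dpt i a (qturn_dpt i a c))) = c.
Proof.
  destruct c as [p j]. unfold qturn_dpt; simpl. destruct (at_layer i a p) eqn:E;
    repeat (simpl; rewrite ?at_layer_rot_pt, ?E).
  - now rewrite rot_pt4, !rot_axis_involutive.
  - reflexivity.
Qed.

Lemma exist_bool_eq {T : Type} (P : T -> bool) (x y : {a | P a = true}) :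
  proj1_sig x = proj1_sig y -> x = y.
Proof.
  destruct x as [a Ha], y as [b Hb]; simpl; intros ->. f_equal. apply UIP_dec, bool_dec.
Qed.

Lemma qturn_ecell_surjective {L : Type} i (a : Lbar L) : Surjective (qturn_ecell i a).
Proof.
  intro c. exists (qturn_ecell i a (qturn_ecell i a (qturn_ecell i a c))).
  apply (exist_bool_eq edgeless_cellb), qturn_pt4.
Qed.

Lemma qturn_dcell_surjective {L : Type} i (a : Lbar L) : Surjective (qturn_dcell i a).
Proof.
  intro c. exists (qturn_dcell i a (qturn_dcell i a (qturn_dcell i a c))).
  apply (exist_bool_eq (fun c => is_inf (coord (fst c) (snd c)))), qturn_dpt4.
Qed.

Theorem corollary3p4 (L : Type) (HL : infinite_type L) :
  uc_submonoid (@qturn_ecell L) /\ uc_submonoid (@qturn_dcell L).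
Proof.
  split; apply uc_submonoid_of_surjective.
  - exact qturn_ecell_surjective.
  - exact qturn_dcell_surjective.
Qed.
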